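(* Let $\mathcal{X}$ be a finite-dimensional Hilbert space, $\sigma\in\mathcal{D}(\mathcal{X})$, $\Phi$ a quantum channel on $\mathcal{L}(\mathcal{X})$ with Kraus operators $\{A_i\}_i$, $H$ a Hermitian operator on $\mathcal{X}$, $\epsilon\in\mathbb{R}$, $U_\epsilon=\exp(-i\epsilon H)$, and $\Psi(\rho)=U_\epsilon\Phi(\rho)U_\epsilon^\dagger$. Then $$G_{\mathrm{ch}}(\Phi,\Psi;\sigma)=1+\sum_{i,j}\left|\operatorname{Tr}(\sigma A_i^\dagger U_\epsilon A_j)\right|^2-\sum_{i,j}\left|\operatorname{Tr}(\sigma A_i^\dagger A_j)\right|^2.$$
   Context: $\mathcal{D}(\mathcal{X})$ is the set of density operators on $\mathcal{X}$. Superfidelity: $G(\rho_1,\rho_2)=\operatorname{Tr}(\rho_1\rho_2)+\sqrt{1-\operatorname{Tr}\rho_1^2}\sqrt{1-\operatorname{Tr}\rho_2^2}$. Channel superfidelity: $G_{\mathrm{ch}}(\Phi,\Psi;\sigma)=\inf G\big((\Phi\otimes\mathbb{1}_{\mathcal{L}(\mathcal{Z})})(\xi),(\Psi\otimes\mathbb{1}_{\mathcal{L}(\mathcal{Z})})(\xi)\big)$ over all finite-dimensional $\mathcal{Z}$ and all pure states $\xi$ on $\mathcal{X}\otimes\mathcal{Z}$ with $\operatorname{Tr}_{\mathcal{Z}}\xi=\sigma$. *)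

From Stdlib Require Import Reals Lra Factorial.
Open Scope R_scope.

Record C := mkC { Re : R; Im : R }.
Definition C0 : C := mkC 0 0.
Definition C1 : C := mkC 1 0.
Definition Cadd (z w : C) : C := mkC (Re z + Re w) (Im z + Im w).
Definition Cmul (z w : C) : C :=
  mkC (Re z * Re w - Im z * Im w) (Re z * Im w + Im z * Re w).
Definition Cconj (z : C) : C := mkC (Re z) (- Im z).
Definition Cscale (a : R) (z : C) : C := mkC (a * Re z) (a * Im z).
Definition Cnorm2 (z : C) : R := Re z * Re z + Im z * Im z.

Fixpoint Csum (n : nat) (f : nat -> C) : C :=
  match n with O => C0 | S k => Cadd (Csum k f) (f k) end.
Fixpoint Rsum (n : nat) (f : nat -> R) : R :=
  match n with O => 0 | S k => Rsum k f + f k end.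

(** * Matrices: operators on C^d are represented by their entries at indices < d *)
Definition Mat := nat -> nat -> C.
Definition Vec := nat -> C.
Definition mid : Mat := fun i j => if Nat.eqb i j then C1 else C0.
Definition mmul (d : nat) (A B : Mat) : Mat :=
  fun i j => Csum d (fun k => Cmul (A i k) (B k j)).
Definition madj (A : Mat) : Mat := fun i j => Cconj (A j i).
Definition mscale (c : C) (A : Mat) : Mat := fun i j => Cmul c (A i j).
Definition msum (r : nat) (F : nat -> Mat) : Mat := fun i j => Csum r (fun k => F k i j).
Definition mtrace (d : nat) (A : Mat) : C := Csum d (fun i => A i i).
Fixpoint mpow (d : nat) (M : Mat) (k : nat) : Mat :=
  match k with O => mid | S k' => mmul d (mpow d M k') M end.

Definition meq (d : nat) (A B : Mat) : Prop :=
  forall i j, (i < d)%nat -> (j < d)%nat -> A i j = B i j.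

Definition hermitian (d : nat) (H : Mat) : Prop := meq d H (madj H).
Definition psd (d : nat) (S : Mat) : Prop :=
  hermitian d S /\
  forall v : Vec, 0 <= Re (Csum d (fun i => Cmul (Cconj (v i))
                                         (Csum d (fun j => Cmul (S i j) (v j))))).
Definition density (d : nat) (S : Mat) : Prop := psd d S /\ mtrace d S = C1.

Definition is_mexp (d : nat) (M U : Mat) : Prop :=
  forall i j, (i < d)%nat -> (j < d)%nat ->
    Un_cv (fun N => Re (Csum (S N) (fun k => Cscale (/ INR (fact k)) (mpow d M k i j))))
          (Re (U i j)) /\
    Un_cv (fun N => Im (Csum (S N) (fun k => Cscale (/ INR (fact k)) (mpow d M k i j))))
          (Im (U i j)).

Definition kraus (n r : nat) (A : nat -> Mat) : Prop :=
  meq n (msum r (fun k => mmul n (madj (A k)) (A k))) mid.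
Definition chan (d r : nat) (A : nat -> Mat) (rho : Mat) : Mat :=
  msum r (fun k => mmul d (mmul d (A k) rho) (madj (A k))).

(** C^n (x) C^m identified with C^(n*m), basis e_a (x) f_b |-> index a*m+b *)
Definition kron_id (n m : nat) (A : Mat) : Mat :=
  fun i j => if Nat.eqb (i mod m)%nat (j mod m)%nat then A (i / m)%nat (j / m)%nat else C0.
Definition ptraceZ (n m : nat) (X : Mat) : Mat :=
  fun a b => Csum m (fun k => X (a * m + k)%nat (b * m + k)%nat).

Definition chan_ext (n r : nat) (A : nat -> Mat) (m : nat) (rho : Mat) : Mat :=
  chan (n * m) r (fun k => kron_id n m (A k)) rho.

Definition unit_vec (D : nat) (psi : Vec) : Prop := Rsum D (fun k => Cnorm2 (psi k)) = 1.
Definition proj (psi : Vec) : Mat := fun i j => Cmul (psi i) (Cconj (psi j)).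

Definition superfidelity (d : nat) (r1 r2 : Mat) : R :=
  Re (mtrace d (mmul d r1 r2))
  + sqrt (1 - Re (mtrace d (mmul d r1 r1))) * sqrt (1 - Re (mtrace d (mmul d r2 r2))).

(** The set whose infimum is G_ch(Phi,Psi;sigma).  PhiZ m (resp. PsiZ m) is
    Phi (x) id_{L(C^m)} (resp. Psi (x) id_{L(C^m)}). *)
Definition Gch_values (n : nat) (PhiZ PsiZ : nat -> Mat -> Mat) (sigma : Mat) : R -> Prop :=
  fun g => exists (m : nat) (psi : Vec),
    unit_vec (n * m) psi /\ meq n (ptraceZ n m (proj psi)) sigma /\
    g = superfidelity (n * m) (PhiZ m (proj psi)) (PsiZ m (proj psi)).

Definition is_glb (S : R -> Prop) (x : R) : Prop :=
  (forall y, S y -> x <= y) /\ (forall z, (forall y, S y -> z <= y) -> z <= x).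

(* Superfidelity sees its arguments only through [Tr(rho1 rho2)], [Tr rho1^2] and
   [Tr rho2^2].  If [psi] purifies [sigma], then [(Phi (x) 1)(psi)] is the sum of the
   rank-one operators [|phi_k><phi_k|] with [phi_k = (A_k (x) 1) psi], and
   [(Psi (x) 1)(psi)] is the same sum for the vectors [(U (x) 1) phi_k].  All three
   traces are therefore sums of squared moduli of inner products between these
   vectors, and every such inner product equals [Tr(sigma A_k^* V A_l)] with
   [V = U] or [V = U^* U = 1].  So every admissible [psi] yields the same value;
   since both states have the same purity [P <= 1], the product of square roots is
   [1 - P], which gives the formula.  The infimum is attained because purifications
   exist: a positive semidefinite matrix is a Gram matrix.  Unitarity of
   [U = exp(-i eps H)] follows from the Cauchy product of the exponential series of
   the skew-adjoint [M = -i eps H] and of [M^* = -M]. *)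

From Stdlib Require Import Reals Lra Lia FunctionalExtensionality Factorial.
From Coquelicot Require Import Series Hierarchy ElemFct.
Open Scope R_scope.

Definition Copp (z : C) : C := mkC (- Re z) (- Im z).
Definition Csub (z w : C) : C := Cadd z (Copp w).

Lemma Cext (z w : C) : Re z = Re w -> Im z = Im w -> z = w.
Proof. destruct z, w; simpl; intros -> ->; reflexivity. Qed.

Lemma C_ring_theory : ring_theory C0 C1 Cadd Cmul Csub Copp (@eq C).
Proof.
  constructor; intros; apply Cext; unfold Csub, Cadd, Cmul, Copp, C0, C1; simpl; ring.
Qed.
Add Ring C_ring : C_ring_theory.

Lemma Cconj_add z w : Cconj (Cadd z w) = Cadd (Cconj z) (Cconj w).
Proof. apply Cext; simpl; ring. Qed.
Lemma Cconj_mul z w : Cconj (Cmul z w) = Cmul (Cconj z) (Cconj w).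
Proof. apply Cext; simpl; ring. Qed.
Lemma Cconj_involutive z : Cconj (Cconj z) = z.
Proof. apply Cext; simpl; ring. Qed.
Lemma Cconj_0 : Cconj C0 = C0.
Proof. apply Cext; simpl; ring. Qed.

Lemma Cnorm2_nonneg z : 0 <= Cnorm2 z.
Proof. unfold Cnorm2; nra. Qed.
Lemma Re_Cconj_mul_self z : Re (Cmul (Cconj z) z) = Cnorm2 z.
Proof. unfold Cnorm2; simpl; ring. Qed.

Lemma Csum_ext n f g : (forall k, (k < n)%nat -> f k = g k) -> Csum n f = Csum n g.
Proof.
  induction n; simpl; intros H; [reflexivity|].
  rewrite IHn by (intros; apply H; lia). rewrite H by lia. reflexivity.
Qed.
Lemma Csum_0 n f : (forall k, (k < n)%nat -> f k = C0) -> Csum n f = C0.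
Proof.
  induction n; simpl; intros H; [reflexivity|].
  rewrite IHn by (intros; apply H; lia). rewrite H by lia. ring.
Qed.
Lemma Csum_add n f g : Csum n (fun k => Cadd (f k) (g k)) = Cadd (Csum n f) (Csum n g).
Proof. induction n; simpl; [apply Cext; simpl; ring|]. rewrite IHn; ring. Qed.
Lemma Csum_opp n f : Csum n (fun k => Copp (f k)) = Copp (Csum n f).
Proof. induction n; simpl; [apply Cext; simpl; ring|]. rewrite IHn; ring. Qed.
Lemma Csum_mul_l n c f : Csum n (fun k => Cmul c (f k)) = Cmul c (Csum n f).
Proof. induction n; simpl; [apply Cext; simpl; ring|]. rewrite IHn; ring. Qed.
Lemma Csum_mul_r n c f : Csum n (fun k => Cmul (f k) c) = Cmul (Csum n f) c.
Proof. induction n; simpl; [apply Cext; simpl; ring|]. rewrite IHn; ring. Qed.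
Lemma Csum_mul_Csum n m f g :
  Cmul (Csum n f) (Csum m g) = Csum n (fun i => Csum m (fun j => Cmul (f i) (g j))).
Proof.
  rewrite <- Csum_mul_r. apply Csum_ext; intros i _. rewrite <- Csum_mul_l. reflexivity.
Qed.
Lemma Csum_conj n f : Cconj (Csum n f) = Csum n (fun k => Cconj (f k)).
Proof. induction n; simpl; [apply Cconj_0|]. rewrite Cconj_add, IHn; reflexivity. Qed.
Lemma Csum_swap n m (f : nat -> nat -> C) :
  Csum n (fun i => Csum m (fun j => f i j)) = Csum m (fun j => Csum n (fun i => f i j)).
Proof.
  induction n; simpl.
  - symmetry; apply Csum_0; reflexivity.
  - rewrite IHn, <- Csum_add. reflexivity.
Qed.
Lemma Csum_app p q f : Csum (p + q) f = Cadd (Csum p f) (Csum q (fun k => f (p + k)%nat)).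
Proof.
  induction q; simpl.
  - rewrite Nat.add_0_r. ring.
  - rewrite Nat.add_succ_r; simpl. rewrite IHq. ring.
Qed.
Lemma Csum_blocks n m f :
  Csum (n * m) f = Csum n (fun a => Csum m (fun k => f (a * m + k)%nat)).
Proof.
  induction n; simpl; [reflexivity|].
  rewrite Nat.add_comm, Csum_app, IHn. reflexivity.
Qed.
Lemma Csum_delta n k (x : nat -> C) : (k < n)%nat ->
  Csum n (fun i => if Nat.eqb i k then x i else C0) = x k.
Proof.
  induction n; intros Hk; [lia|]. simpl.
  destruct (Nat.eq_dec k n) as [->|Hne].
  - rewrite Csum_0. { rewrite Nat.eqb_refl. ring. }
    intros j Hj. destruct (Nat.eqb_spec j n); [lia|reflexivity].
  - rewrite IHn by lia. destruct (Nat.eqb_spec n k); [lia|]. ring.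
Qed.
Lemma Csum_mid_l n i f : (i < n)%nat -> Csum n (fun j => Cmul (mid i j) (f j)) = f i.
Proof.
  intros Hi. rewrite <- (Csum_delta n i f Hi). apply Csum_ext; intros j _.
  unfold mid. destruct (Nat.eqb_spec i j), (Nat.eqb_spec j i); subst; try lia;
  apply Cext; simpl; ring.
Qed.
Lemma Csum_mid_r n j f : (j < n)%nat -> Csum n (fun i => Cmul (f i) (mid i j)) = f j.
Proof.
  intros Hj. rewrite <- (Csum_delta n j f Hj). apply Csum_ext; intros i _.
  unfold mid. destruct (Nat.eqb_spec i j); subst; apply Cext; simpl; ring.
Qed.

Lemma Re_Csum n f : Re (Csum n f) = Rsum n (fun k => Re (f k)).
Proof. induction n; simpl; [reflexivity|]. rewrite IHn; reflexivity. Qed.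
Lemma Im_Csum n f : Im (Csum n f) = Rsum n (fun k => Im (f k)).
Proof. induction n; simpl; [reflexivity|]. rewrite IHn; reflexivity. Qed.

Lemma Rsum_ext n f g : (forall k, (k < n)%nat -> f k = g k) -> Rsum n f = Rsum n g.
Proof.
  induction n; simpl; intros H; [reflexivity|].
  rewrite IHn by (intros; apply H; lia). rewrite H by lia. reflexivity.
Qed.
Lemma Rsum_add n f g : Rsum n (fun k => f k + g k) = Rsum n f + Rsum n g.
Proof. induction n; simpl; [ring|]. rewrite IHn; ring. Qed.
Lemma Rsum_sub n f g : Rsum n (fun k => f k - g k) = Rsum n f - Rsum n g.
Proof. induction n; simpl; [ring|]. rewrite IHn; ring. Qed.
Lemma Rsum_mul_l n c f : Rsum n (fun k => c * f k) = c * Rsum n f.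
Proof. induction n; simpl; [ring|]. rewrite IHn; ring. Qed.
Lemma Rsum_const n c : Rsum n (fun _ => c) = INR n * c.
Proof.
  induction n; [simpl; ring|].
  change (Rsum (S n) (fun _ => c)) with (Rsum n (fun _ => c) + c). rewrite IHn, S_INR. ring.
Qed.
Lemma Rsum_le n f g : (forall k, (k < n)%nat -> f k <= g k) -> Rsum n f <= Rsum n g.
Proof.
  induction n; simpl; intros H; [lra|].
  assert (Rsum n f <= Rsum n g) by (apply IHn; intros; apply H; lia).
  assert (f n <= g n) by (apply H; lia). lra.
Qed.
Lemma Rsum_nonneg n f : (forall k, (k < n)%nat -> 0 <= f k) -> 0 <= Rsum n f.
Proof.
  intros H. replace 0 with (Rsum n (fun _ => 0)) by (rewrite Rsum_const; ring).
  apply Rsum_le; auto.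
Qed.
Lemma Rsum_ge_term n f k : (forall i, (i < n)%nat -> 0 <= f i) -> (k < n)%nat -> f k <= Rsum n f.
Proof.
  induction n; intros H Hk; [lia|]. simpl.
  destruct (Nat.eq_dec k n) as [->|Hne].
  - pose proof (Rsum_nonneg n f ltac:(intros; apply H; lia)). lra.
  - pose proof (IHn ltac:(intros; apply H; lia) ltac:(lia)). pose proof (H n ltac:(lia)). lra.
Qed.
Lemma Rsum_swap n m (f : nat -> nat -> R) :
  Rsum n (fun i => Rsum m (fun j => f i j)) = Rsum m (fun j => Rsum n (fun i => f i j)).
Proof.
  induction n; simpl.
  - rewrite Rsum_const; ring.
  - rewrite IHn, <- Rsum_add. reflexivity.
Qed.
Lemma Rsum_mul_Rsum n m f g :
  Rsum n f * Rsum m g = Rsum n (fun i => Rsum m (fun j => f i * g j)).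
Proof.
  rewrite Rmult_comm, <- Rsum_mul_l.
  apply Rsum_ext; intros i _. rewrite Rmult_comm, <- Rsum_mul_l. apply Rsum_ext; intros; ring.
Qed.
Lemma Rsum_symmetrize n g : Rsum n (fun i => Rsum n (fun j => g i j)) =
  / 2 * Rsum n (fun i => Rsum n (fun j => g i j + g j i)).
Proof.
  assert (E : Rsum n (fun i => Rsum n (fun j => g i j + g j i)) =
    Rsum n (fun i => Rsum n (fun j => g i j)) + Rsum n (fun i => Rsum n (fun j => g j i))).
  { rewrite <- Rsum_add. apply Rsum_ext; intros. apply Rsum_add. }
  rewrite E, (Rsum_swap n n (fun j i => g i j)). field.
Qed.
Lemma Rsum_app p q f : Rsum (p + q) f = Rsum p f + Rsum q (fun k => f (p + k)%nat).
Proof.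
  induction q; simpl.
  - rewrite Nat.add_0_r. ring.
  - rewrite Nat.add_succ_r; simpl. rewrite IHq. ring.
Qed.
Lemma Rsum_blocks n m f :
  Rsum (n * m) f = Rsum n (fun a => Rsum m (fun k => f (a * m + k)%nat)).
Proof.
  induction n; simpl; [reflexivity|].
  rewrite Nat.add_comm, Rsum_app, IHn. reflexivity.
Qed.

Lemma meq_refl d A : meq d A A.
Proof. intros i j _ _; reflexivity. Qed.
Lemma meq_sym d A B : meq d A B -> meq d B A.
Proof. intros H i j Hi Hj. rewrite H by lia. reflexivity. Qed.
Lemma meq_trans d A B X : meq d A B -> meq d B X -> meq d A X.
Proof. intros H1 H2 i j Hi Hj. rewrite H1, H2 by lia. reflexivity. Qed.

Lemma mmul_meq d A A' B B' : meq d A A' -> meq d B B' -> meq d (mmul d A B) (mmul d A' B').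
Proof.
  intros HA HB i j Hi Hj. unfold mmul. apply Csum_ext; intros k Hk.
  rewrite HA, HB by lia. reflexivity.
Qed.
Lemma mtrace_meq d A A' : meq d A A' -> mtrace d A = mtrace d A'.
Proof. intros H. unfold mtrace. apply Csum_ext; intros k Hk. apply H; lia. Qed.

Lemma mmul_assoc d A B X : meq d (mmul d (mmul d A B) X) (mmul d A (mmul d B X)).
Proof.
  intros i j _ _. unfold mmul.
  transitivity (Csum d (fun k => Csum d (fun l => Cmul (A i l) (Cmul (B l k) (X k j))))).
  { apply Csum_ext; intros k _. rewrite <- Csum_mul_r. apply Csum_ext; intros l _. ring. }
  rewrite Csum_swap. apply Csum_ext; intros l _. rewrite <- Csum_mul_l. reflexivity.
Qed.
Lemma mmul_mid_l d B : meq d (mmul d mid B) B.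
Proof. intros i j Hi Hj. unfold mmul. apply (Csum_mid_l d i (fun k => B k j)); lia. Qed.
Lemma mmul_mid_r d B : meq d (mmul d B mid) B.
Proof. intros i j Hi Hj. unfold mmul. apply (Csum_mid_r d j (fun k => B i k)); lia. Qed.
Lemma madj_mmul d A B : meq d (madj (mmul d A B)) (mmul d (madj B) (madj A)).
Proof.
  intros i j _ _. unfold madj, mmul. rewrite Csum_conj.
  apply Csum_ext; intros k _. rewrite Cconj_mul. ring.
Qed.

Lemma mtrace_mmul_msum n r S X :
  Csum r (fun k => mtrace n (mmul n S (X k))) = mtrace n (mmul n S (msum r X)).
Proof.
  unfold mtrace, mmul, msum. rewrite Csum_swap. apply Csum_ext; intros i _.
  rewrite Csum_swap. apply Csum_ext; intros j _. rewrite Csum_mul_l. reflexivity.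
Qed.

Lemma madj_mmul_unitary d U X Y : meq d (mmul d (madj U) U) mid ->
  meq d (mmul d (madj (mmul d U X)) (mmul d U Y)) (mmul d (madj X) Y).
Proof.
  intros HU.
  eapply meq_trans; [apply mmul_meq; [apply madj_mmul|apply meq_refl]|].
  eapply meq_trans; [apply mmul_assoc|]. apply mmul_meq; [apply meq_refl|].
  eapply meq_trans; [apply meq_sym, mmul_assoc|].
  eapply meq_trans; [apply mmul_meq; [exact HU|apply meq_refl]|]. apply mmul_mid_l.
Qed.

Lemma kraus_mtrace_sum n r A S : kraus n r A ->
  Csum r (fun k => mtrace n (mmul n S (mmul n (madj (A k)) (A k)))) = mtrace n S.
Proof.
  intros HK. rewrite mtrace_mmul_msum. apply mtrace_meq.
  eapply meq_trans; [apply mmul_meq; [apply meq_refl|exact HK]|apply mmul_mid_r].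
Qed.

(** * Sums of rank-one operators *)

Definition mapply (d : nat) (X : Mat) (psi : Vec) : Vec :=
  fun i => Csum d (fun j => Cmul (X i j) (psi j)).
Definition inner (d : nat) (x y : Vec) : C := Csum d (fun i => Cmul (Cconj (x i)) (y i)).
Definition sum_proj (r : nat) (phi : nat -> Vec) : Mat :=
  fun i j => Csum r (fun k => Cmul (phi k i) (Cconj (phi k j))).

Lemma inner_ext d x x' y y' : (forall i, (i < d)%nat -> x i = x' i) ->
  (forall i, (i < d)%nat -> y i = y' i) -> inner d x y = inner d x' y'.
Proof.
  intros Hx Hy. unfold inner. apply Csum_ext; intros i Hi. rewrite Hx, Hy by lia. reflexivity.
Qed.

Lemma Re_inner_self d x : Re (inner d x x) = Rsum d (fun i => Cnorm2 (x i)).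
Proof.
  unfold inner. rewrite Re_Csum. apply Rsum_ext; intros. apply Re_Cconj_mul_self.
Qed.

Lemma cauchy_schwarz d x y : Cnorm2 (inner d x y) <= Re (inner d x x) * Re (inner d y y).
Proof.
  rewrite !Re_inner_self, Rsum_mul_Rsum, <- Re_Cconj_mul_self.
  unfold inner. rewrite Csum_conj, Csum_mul_Csum, Re_Csum.
  set (z := fun i => Cmul (Cconj (x i)) (y i)).
  rewrite (Rsum_ext d _ (fun i => Rsum d (fun j => Re (Cmul (Cconj (z i)) (z j)))))
    by (intros; apply Re_Csum).
  (* Lagrange's identity: the defect is half a sum of |x_i y_j - x_j y_i|^2. *)
  assert (H : 0 <= Rsum d (fun i => Rsum d (fun j =>
      Cnorm2 (x i) * Cnorm2 (y j) - Re (Cmul (Cconj (z i)) (z j))))).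
  { rewrite Rsum_symmetrize. apply Rmult_le_pos; [lra|]. apply Rsum_nonneg; intros i _.
    apply Rsum_nonneg; intros j _.
    replace (_ + _) with (Cnorm2 (Csub (Cmul (x i) (y j)) (Cmul (x j) (y i))));
      [apply Cnorm2_nonneg|].
    unfold z, Cnorm2; simpl. ring. }
  rewrite (Rsum_ext d _ (fun i => Rsum d (fun j => Cnorm2 (x i) * Cnorm2 (y j)) -
                                  Rsum d (fun j => Re (Cmul (Cconj (z i)) (z j)))))
    in H by (intros; apply Rsum_sub).
  rewrite Rsum_sub in H. lra.
Qed.

Lemma conj_sum_proj d r X phi :
  mmul d (mmul d X (sum_proj r phi)) (madj X) = sum_proj r (fun k => mapply d X (phi k)).
Proof.
  extensionality i; extensionality j. unfold mmul, sum_proj, mapply, madj.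
  transitivity (Csum d (fun l => Csum d (fun k' => Csum r (fun k =>
     Cmul (Cmul (X i k') (phi k k')) (Cmul (Cconj (phi k l)) (Cconj (X j l))))))).
  { apply Csum_ext; intros l _. rewrite <- Csum_mul_r. apply Csum_ext; intros k' _.
    rewrite <- Csum_mul_l, <- Csum_mul_r. apply Csum_ext; intros k _. ring. }
  rewrite (Csum_ext d _ _ (fun l _ => Csum_swap d r _)), Csum_swap. apply Csum_ext; intros k _.
  rewrite Csum_conj, Csum_mul_Csum, Csum_swap. apply Csum_ext; intros l _.
  apply Csum_ext; intros k' _. rewrite Cconj_mul. ring.
Qed.

Lemma Re_mtrace_sum_proj D r r' x y :
  Re (mtrace D (mmul D (sum_proj r x) (sum_proj r' y))) =
  Rsum r (fun k => Rsum r' (fun l => Cnorm2 (inner D (x k) (y l)))).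
Proof.
  assert (E : mtrace D (mmul D (sum_proj r x) (sum_proj r' y)) =
     Csum r (fun k => Csum r' (fun l =>
       Cmul (Cconj (inner D (x k) (y l))) (inner D (x k) (y l))))).
  { unfold mtrace, mmul, sum_proj.
    transitivity (Csum D (fun i => Csum r (fun k => Csum r' (fun l => Csum D (fun j =>
          Cmul (Cmul (Cconj (y l i)) (x k i)) (Cmul (Cconj (x k j)) (y l j))))))).
    { apply Csum_ext; intros i _.
      transitivity (Csum D (fun j => Csum r (fun k => Csum r' (fun l =>
          Cmul (Cmul (Cconj (y l i)) (x k i)) (Cmul (Cconj (x k j)) (y l j)))))).
      { apply Csum_ext; intros j _. rewrite Csum_mul_Csum.
        apply Csum_ext; intros k _. apply Csum_ext; intros l _. ring. }
      rewrite Csum_swap. apply Csum_ext; intros k _. apply Csum_swap. }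
    rewrite Csum_swap. apply Csum_ext; intros k _. rewrite Csum_swap.
    apply Csum_ext; intros l _. unfold inner. rewrite Csum_conj, Csum_mul_Csum.
    apply Csum_ext; intros i _. apply Csum_ext; intros j _.
    rewrite Cconj_mul, Cconj_involutive. ring. }
  rewrite E, Re_Csum. apply Rsum_ext; intros k _. rewrite Re_Csum.
  apply Rsum_ext; intros l _. apply Re_Cconj_mul_self.
Qed.

Lemma purity_sum_proj_le D r x :
  Rsum r (fun k => Re (inner D (x k) (x k))) = 1 ->
  Rsum r (fun k => Rsum r (fun l => Cnorm2 (inner D (x k) (x l)))) <= 1.
Proof.
  intros Hx.
  apply Rle_trans with
    (Rsum r (fun k => Rsum r (fun l => Re (inner D (x k) (x k)) * Re (inner D (x l) (x l))))).
  - apply Rsum_le; intros; apply Rsum_le; intros; apply cauchy_schwarz.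
  - rewrite <- Rsum_mul_Rsum, Hx. lra.
Qed.

Lemma superfidelity_sum_proj D r x y :
  Rsum r (fun k => Re (inner D (x k) (x k))) = 1 ->
  (forall k l, inner D (y k) (y l) = inner D (x k) (x l)) ->
  superfidelity D (sum_proj r x) (sum_proj r y) =
  1 + Rsum r (fun k => Rsum r (fun l => Cnorm2 (inner D (x k) (y l))))
    - Rsum r (fun k => Rsum r (fun l => Cnorm2 (inner D (x k) (x l)))).
Proof.
  intros Hx Hgram. pose proof (purity_sum_proj_le D r x Hx) as Hpur.
  unfold superfidelity. rewrite !Re_mtrace_sum_proj.
  rewrite (Rsum_ext r (fun k => Rsum r (fun l => Cnorm2 (inner D (y k) (y l))))
             (fun k => Rsum r (fun l => Cnorm2 (inner D (x k) (x l)))))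
    by (intros; apply Rsum_ext; intros; rewrite Hgram; reflexivity).
  rewrite sqrt_sqrt by lra. ring.
Qed.

(** * Operators acting on the first tensor factor *)

Lemma idx_mod a m c : (c < m)%nat -> ((a * m + c) mod m = c)%nat.
Proof.
  intros Hc. rewrite Nat.add_comm, Nat.Div0.mod_add by lia. apply Nat.mod_small; lia.
Qed.
Lemma idx_div a m c : (c < m)%nat -> ((a * m + c) / m = a)%nat.
Proof.
  intros Hc. rewrite Nat.add_comm, Nat.div_add by lia. rewrite Nat.div_small by lia. lia.
Qed.
Lemma idx_decomp n m i : (i < n * m)%nat ->
  i = (i / m * m + i mod m)%nat /\ (i / m < n)%nat /\ (i mod m < m)%nat.
Proof.
  intros Hi. assert (m <> 0%nat) by (intro; subst; lia).
  split; [|split].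
  - rewrite Nat.mul_comm. apply Nat.div_mod; lia.
  - apply Nat.Div0.div_lt_upper_bound. lia.
  - apply Nat.mod_upper_bound; lia.
Qed.

Lemma mapply_kron_id n m X psi a c : (c < m)%nat ->
  mapply (n * m) (kron_id n m X) psi (a * m + c)%nat =
  Csum n (fun b => Cmul (X a b) (psi (b * m + c)%nat)).
Proof.
  intros Hc. unfold mapply. rewrite Csum_blocks. apply Csum_ext; intros b Hb.
  unfold kron_id. rewrite idx_mod, idx_div by lia.
  rewrite <- (Csum_delta m c (fun l => Cmul (X a b) (psi (b * m + l)%nat))) by lia.
  apply Csum_ext; intros l Hl. rewrite idx_mod, idx_div by lia.
  destruct (Nat.eqb_spec c l), (Nat.eqb_spec l c); subst; try lia; try reflexivity.
  apply Cext; simpl; ring.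
Qed.

Lemma mapply_kron_id_mmul n m X Y psi i : (i < n * m)%nat ->
  mapply (n * m) (kron_id n m X) (mapply (n * m) (kron_id n m Y) psi) i =
  mapply (n * m) (kron_id n m (mmul n X Y)) psi i.
Proof.
  intros Hi. destruct (idx_decomp n m i Hi) as [Ei [Ha Hc]].
  rewrite Ei. set (a := (i / m)%nat) in *. set (c := (i mod m)%nat) in *.
  rewrite !mapply_kron_id by lia.
  rewrite (Csum_ext n _ (fun b => Cmul (X a b) (Csum n (fun e => Cmul (Y b e) (psi (e * m + c)%nat)))))
    by (intros b Hb; rewrite mapply_kron_id by lia; reflexivity).
  unfold mmul.
  transitivity (Csum n (fun b => Csum n (fun e =>
    Cmul (Cmul (X a b) (Y b e)) (psi (e * m + c)%nat)))).
  { apply Csum_ext; intros b _. rewrite <- Csum_mul_l. apply Csum_ext; intros e _. ring. }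
  rewrite Csum_swap. apply Csum_ext; intros e _. rewrite Csum_mul_r. reflexivity.
Qed.

Lemma inner_kron_id n m X Y psi :
  inner (n * m) (mapply (n * m) (kron_id n m X) psi) (mapply (n * m) (kron_id n m Y) psi) =
  mtrace n (mmul n (ptraceZ n m (proj psi)) (mmul n (madj X) Y)).
Proof.
  set (t := fun a b e c =>
    Cmul (Cmul (Cconj (X a b)) (Y a e)) (Cmul (psi (e * m + c)%nat) (Cconj (psi (b * m + c)%nat)))).
  transitivity (Csum n (fun a => Csum n (fun b => Csum n (fun e => Csum m (fun c => t a b e c))))).
  { unfold inner. rewrite Csum_blocks. apply Csum_ext; intros a _.
    transitivity (Csum m (fun c => Csum n (fun b => Csum n (fun e => t a b e c)))).
    { apply Csum_ext; intros c Hc. rewrite !mapply_kron_id by lia.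
      rewrite Csum_conj, Csum_mul_Csum.
      apply Csum_ext; intros b _; apply Csum_ext; intros e _. unfold t.
      rewrite Cconj_mul. ring. }
    rewrite Csum_swap. apply Csum_ext; intros b _. apply Csum_swap. }
  transitivity (Csum n (fun e => Csum n (fun b => Csum n (fun a => Csum m (fun c => t a b e c))))).
  { rewrite Csum_swap.
    transitivity (Csum n (fun b => Csum n (fun e => Csum n (fun a => Csum m (fun c => t a b e c))))).
    { apply Csum_ext; intros b _. apply Csum_swap. }
    apply Csum_swap. }
  unfold mtrace, mmul, ptraceZ, proj, madj.
  apply Csum_ext; intros e _. apply Csum_ext; intros b _.
  rewrite Csum_mul_Csum, Csum_swap. apply Csum_ext; intros a _. apply Csum_ext; intros c _.
  unfold t. ring.
Qed.

Lemma inner_kron_id_purification n m sigma psi X Y :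
  meq n (ptraceZ n m (proj psi)) sigma ->
  inner (n * m) (mapply (n * m) (kron_id n m X) psi) (mapply (n * m) (kron_id n m Y) psi) =
  mtrace n (mmul n sigma (mmul n (madj X) Y)).
Proof.
  intros Hpt. rewrite inner_kron_id. apply mtrace_meq, mmul_meq; [exact Hpt|apply meq_refl].
Qed.

Lemma proj_sum_proj psi : proj psi = sum_proj 1 (fun _ => psi).
Proof.
  extensionality i; extensionality j. unfold sum_proj, proj; simpl. apply Cext; simpl; ring.
Qed.

Lemma chan_proj d r B psi : chan d r B (proj psi) = sum_proj r (fun k => mapply d (B k) psi).
Proof.
  extensionality i; extensionality j. unfold chan, msum, sum_proj.
  apply Csum_ext; intros k _. rewrite proj_sum_proj, conj_sum_proj. unfold sum_proj; simpl.
  apply Cext; simpl; ring.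
Qed.

(** * The value of the superfidelity at a purification *)

Lemma superfidelity_purification n r sigma A U m psi :
  kraus n r A -> meq n (mmul n (madj U) U) mid -> mtrace n sigma = C1 ->
  meq n (ptraceZ n m (proj psi)) sigma ->
  superfidelity (n * m) (chan_ext n r A m (proj psi))
    (mmul (n * m) (mmul (n * m) (kron_id n m U) (chan_ext n r A m (proj psi)))
      (madj (kron_id n m U)))
  = 1 + Rsum r (fun i => Rsum r (fun j =>
            Cnorm2 (mtrace n (mmul n sigma (mmul n (mmul n (madj (A i)) U) (A j))))))
       - Rsum r (fun i => Rsum r (fun j =>
            Cnorm2 (mtrace n (mmul n sigma (mmul n (madj (A i)) (A j)))))).
Proof.
  intros HK HU Htr Hpt.
  set (D := (n * m)%nat).
  set (phi := fun k => mapply D (kron_id n m (A k)) psi).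
  assert (Hphi : forall k i, (i < D)%nat ->
    mapply D (kron_id n m U) (phi k) i = mapply D (kron_id n m (mmul n U (A k))) psi i).
  { intros k i Hi. apply mapply_kron_id_mmul. exact Hi. }
  assert (Hvec : forall X Y,
    inner D (mapply D (kron_id n m X) psi) (mapply D (kron_id n m Y) psi) =
    mtrace n (mmul n sigma (mmul n (madj X) Y))).
  { intros X Y. apply inner_kron_id_purification. exact Hpt. }
  assert (Hinner : forall k l,
    inner D (phi k) (phi l) = mtrace n (mmul n sigma (mmul n (madj (A k)) (A l)))).
  { intros k l. apply Hvec. }
  assert (Hcross : forall k l, inner D (phi k) (mapply D (kron_id n m U) (phi l)) =
     mtrace n (mmul n sigma (mmul n (mmul n (madj (A k)) U) (A l)))).
  { intros k l.
    rewrite (inner_ext D _ (phi k) _ (mapply D (kron_id n m (mmul n U (A l))) psi)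
               (fun _ _ => eq_refl) (Hphi l)).
    unfold phi at 1. rewrite Hvec.
    apply mtrace_meq, mmul_meq; [apply meq_refl|apply meq_sym, mmul_assoc]. }
  assert (Hgram : forall k l, inner D (mapply D (kron_id n m U) (phi k))
                                      (mapply D (kron_id n m U) (phi l)) = inner D (phi k) (phi l)).
  { intros k l. rewrite Hinner.
    rewrite (inner_ext D _ (mapply D (kron_id n m (mmul n U (A k))) psi)
                       _ (mapply D (kron_id n m (mmul n U (A l))) psi) (Hphi k) (Hphi l)).
    rewrite Hvec. apply mtrace_meq, mmul_meq; [apply meq_refl|apply madj_mmul_unitary, HU]. }
  assert (Hnorm : Rsum r (fun k => Re (inner D (phi k) (phi k))) = 1).
  { rewrite <- Re_Csum, (Csum_ext r _ _ (fun k _ => Hinner k k)), kraus_mtrace_sum, Htr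
      by exact HK.
    reflexivity. }
  unfold chan_ext. rewrite chan_proj, conj_sum_proj.
  fold D; fold phi.
  rewrite superfidelity_sum_proj by assumption.
  f_equal; [f_equal|]; apply Rsum_ext; intros k _; apply Rsum_ext; intros l _.
  - exact (f_equal Cnorm2 (Hcross k l)).
  - exact (f_equal Cnorm2 (Hinner k l)).
Qed.

(** * Existence of purifications *)

Definition qform (d : nat) (M : Mat) (u : Vec) : C :=
  Csum d (fun i => Cmul (Cconj (u i)) (Csum d (fun j => Cmul (M i j) (u j)))).

Definition evec (i : nat) : Vec := fun k => if Nat.eqb k i then C1 else C0.

Lemma qform_nonneg d M u : psd d M -> 0 <= Re (qform d M u).
Proof. intros [_ H]. apply H. Qed.

Lemma qform_ext d M u u' : (forall i, (i < d)%nat -> u i = u' i) -> qform d M u = qform d M u'.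
Proof.
  intros H. unfold qform. apply Csum_ext; intros i Hi. rewrite H by lia. f_equal.
  apply Csum_ext; intros j Hj. rewrite H by lia. reflexivity.
Qed.

Lemma qform_S d M u : qform (S d) M u =
  Cadd (Cadd (qform d M u) (Cmul (Csum d (fun i => Cmul (Cconj (u i)) (M i d))) (u d)))
       (Cmul (Cconj (u d)) (Cadd (Csum d (fun j => Cmul (M d j) (u j))) (Cmul (M d d) (u d)))).
Proof.
  unfold qform. simpl Csum at 1.
  transitivity (Cadd (Csum d (fun i => Cadd (Cmul (Cconj (u i)) (Csum d (fun j => Cmul (M i j) (u j))))
                                             (Cmul (Cmul (Cconj (u i)) (M i d)) (u d))))
                 (Cmul (Cconj (u d)) (Csum (S d) (fun j => Cmul (M d j) (u j))))).
  { f_equal. apply Csum_ext; intros i _. simpl. ring. }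
  rewrite Csum_add, Csum_mul_r. simpl. ring.
Qed.

Lemma qform_evec d M i : (i < d)%nat -> qform d M (evec i) = M i i.
Proof.
  intros Hi. unfold qform.
  rewrite <- (Csum_delta d i (fun k => M k i)) by lia.
  apply Csum_ext; intros k Hk. unfold evec.
  rewrite (Csum_ext d _ (fun j => if Nat.eqb j i then M k j else C0)).
  2:{ intros j _. destruct (Nat.eqb_spec j i); apply Cext; simpl; ring. }
  rewrite Csum_delta by lia. destruct (Nat.eqb_spec k i); apply Cext; simpl; ring.
Qed.

Lemma Csum_mul_evec d x i : (i < d)%nat -> Csum d (fun j => Cmul (x j) (evec i j)) = x i.
Proof.
  intros Hi. rewrite <- (Csum_delta d i x) by lia. apply Csum_ext; intros j _. unfold evec.
  destruct (Nat.eqb_spec j i); apply Cext; simpl; ring.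
Qed.

Lemma qform_sub_rank_one d M v w :
  qform d (fun i j => Csub (M i j) (Cmul (v i) (Cconj (v j)))) w =
  Csub (qform d M w) (Cmul (Cconj (Csum d (fun j => Cmul (Cconj (v j)) (w j))))
                           (Csum d (fun j => Cmul (Cconj (v j)) (w j)))).
Proof.
  unfold qform.
  transitivity (Csum d (fun i => Cadd (Cmul (Cconj (w i)) (Csum d (fun j => Cmul (M i j) (w j))))
     (Copp (Csum d (fun j => Cmul (Cmul (Cconj (w i)) (v i)) (Cmul (Cconj (v j)) (w j))))))).
  { apply Csum_ext; intros i _.
    rewrite <- !(Csum_mul_l d (Cconj (w i))), <- Csum_opp, <- Csum_add.
    apply Csum_ext; intros j _. unfold Csub. ring. }
  rewrite Csum_add, Csum_opp. unfold Csub. f_equal. f_equal.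
  rewrite Csum_conj, Csum_mul_Csum. apply Csum_ext; intros i _. apply Csum_ext; intros j _.
  rewrite Cconj_mul, Cconj_involutive. ring.
Qed.

Lemma hermitian_diag_real d M i : hermitian d M -> (i < d)%nat -> Im (M i i) = 0.
Proof.
  intros H Hi. specialize (H i i Hi Hi). unfold madj, Cconj in H.
  destruct (M i i) as [a b]. injection H. simpl. lra.
Qed.

Lemma hermitian_sub_rank_one d M v : hermitian (S d) M ->
  hermitian d (fun i j => Csub (M i j) (Cmul (v i) (Cconj (v j)))).
Proof.
  intros Hh i j Hi Hj. unfold madj. rewrite (Hh i j) by lia. unfold madj.
  apply Cext; simpl; ring.
Qed.

(* Positivity of the quadratic form at [(w, t)], split along [C^(d+1) = C^d + C]. *)
Lemma psd_qform_last d M w t : psd (S d) M ->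
  0 <= Re (qform d M w) + Re (Cadd (Cmul (Cconj (Csum d (fun j => Cmul (M d j) (w j)))) t)
                                  (Cmul (Cconj t) (Csum d (fun j => Cmul (M d j) (w j)))))
       + Re (M d d) * Cnorm2 t.
Proof.
  intros Hp.
  pose proof (qform_nonneg _ M (fun i => if Nat.eqb i d then t else w i) Hp) as H.
  rewrite qform_S, Nat.eqb_refl in H.
  rewrite (qform_ext d M _ w) in H
    by (intros i Hi; destruct (Nat.eqb_spec i d); [lia|reflexivity]).
  rewrite (Csum_ext d (fun j => Cmul (M d j) (if Nat.eqb j d then t else w j))
                      (fun j => Cmul (M d j) (w j))) in H
    by (intros i Hi; destruct (Nat.eqb_spec i d); [lia|reflexivity]).
  rewrite (Csum_ext d (fun i => Cmul (Cconj (if Nat.eqb i d then t else w i)) (M i d))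
                      (fun i => Cconj (Cmul (M d i) (w i)))) in H.
  2:{ intros i Hi. destruct (Nat.eqb_spec i d); [lia|].
      destruct Hp as [Hh _]. rewrite (Hh i d) by lia. unfold madj.
      rewrite Cconj_mul. ring. }
  rewrite <- Csum_conj in H.
  pose proof (hermitian_diag_real _ M d (proj1 Hp) ltac:(lia)) as Hd.
  set (c := Csum d (fun j => Cmul (M d j) (w j))) in *.
  set (q := qform d M w) in *.
  destruct (M d d) as [a b]; simpl in Hd; subst b.
  destruct c, t, q. unfold Cnorm2. simpl in *. nra.
Qed.

Lemma psd_diag_nonneg d M : psd (S d) M -> 0 <= Re (M d d).
Proof.
  intros Hp. pose proof (psd_qform_last d M (fun _ => C0) C1 Hp) as H. cbv beta in H.
  rewrite (Csum_0 d (fun j => Cmul (M d j) C0)) in H by (intros; apply Cext; simpl; ring).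
  replace (qform d M (fun _ => C0)) with C0 in H
    by (symmetry; unfold qform; apply Csum_0; intros; apply Cext; simpl; ring).
  unfold Cnorm2 in H; simpl in H. lra.
Qed.

Lemma psd_zero_diag_row d M : psd (S d) M -> Re (M d d) = 0 ->
  forall i, (i < d)%nat -> M d i = C0.
Proof.
  intros Hp Ha i Hi. set (c := M d i).
  destruct (Req_dec (Cnorm2 c) 0) as [H0|H0].
  { unfold Cnorm2 in H0. apply Cext; simpl; nra. }
  exfalso.
  (* At [(e_i, - mu c)] the form is [M i i - 2 mu |c|^2], negative for large [mu]. *)
  set (mu := (Rabs (Re (M i i)) + 1) / (2 * Cnorm2 c)).
  pose proof (psd_qform_last d M (evec i) (Cscale (- mu) c) Hp) as H.
  rewrite (Csum_mul_evec d (fun j => M d j) i Hi), qform_evec, Ha in H by exact Hi.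
  fold c in H.
  assert (Hn : 0 < Cnorm2 c) by (pose proof (Cnorm2_nonneg c); lra).
  assert (E : Re (Cadd (Cmul (Cconj c) (Cscale (- mu) c)) (Cmul (Cconj (Cscale (- mu) c)) c))
              = - (Rabs (Re (M i i)) + 1)) by (unfold mu, Cnorm2 in *; simpl; field; lra).
  rewrite E in H. pose proof (Rle_abs (Re (M i i))). lra.
Qed.

Definition schur_split (d : nat) (M : Mat) (v : Vec) : Prop :=
  psd d (fun i j => Csub (M i j) (Cmul (v i) (Cconj (v j)))) /\
  forall i, (i <= d)%nat -> M i d = Cmul (v i) (Cconj (v d)) /\ M d i = Cmul (v d) (Cconj (v i)).

Lemma schur_split_pos d M : psd (S d) M -> 0 < Re (M d d) ->
  schur_split d M (fun i => Cscale (/ sqrt (Re (M d d))) (M i d)).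
Proof.
  intros Hp Hpos. set (a := Re (M d d)) in *.
  assert (HMdd : M d d = mkC a 0).
  { apply Cext; [reflexivity|exact (hermitian_diag_real _ M d (proj1 Hp) ltac:(lia))]. }
  assert (Hherm : forall i j, (i <= d)%nat -> (j <= d)%nat -> M i j = Cconj (M j i)).
  { intros i j Hi Hj. apply (proj1 Hp i j); lia. }
  assert (Hs : / sqrt a * / sqrt a = / a) by (rewrite <- Rinv_mult, sqrt_sqrt by lra; reflexivity).
  split.
  - split; [apply hermitian_sub_rank_one, Hp|]. intros w.
    change (0 <= Re (qform d (fun i j => Csub (M i j)
      (Cmul (Cscale (/ sqrt a) (M i d)) (Cconj (Cscale (/ sqrt a) (M j d))))) w)).
    rewrite qform_sub_rank_one.
    set (c := Csum d (fun j => Cmul (M d j) (w j))).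
    assert (Ez : Csum d (fun j => Cmul (Cconj (Cscale (/ sqrt a) (M j d))) (w j)) =
                 Cscale (/ sqrt a) c).
    { unfold c. rewrite (Csum_ext d _ (fun j => Cmul (mkC (/ sqrt a) 0) (Cmul (M d j) (w j)))).
      - rewrite Csum_mul_l. apply Cext; simpl; ring.
      - intros j Hj. rewrite (Hherm d j) by lia. apply Cext; simpl; ring. }
    rewrite Ez.
    (* the Schur complement: evaluate the form at [(w, - c / a)] *)
    pose proof (psd_qform_last d M w (Cscale (- / a) c) Hp) as H. fold c a in H.
    assert (E1 : Re (Cadd (Cmul (Cconj c) (Cscale (- / a) c)) (Cmul (Cconj (Cscale (- / a) c)) c))
                 + a * Cnorm2 (Cscale (- / a) c) = - (/ a * Cnorm2 c))
      by (unfold Cnorm2; simpl; field; lra).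
    assert (E2 : Re (Csub (qform d M w) (Cmul (Cconj (Cscale (/ sqrt a) c)) (Cscale (/ sqrt a) c)))
                 = Re (qform d M w) - (/ sqrt a * / sqrt a) * Cnorm2 c)
      by (unfold Cnorm2; simpl; ring).
    rewrite E2, Hs. lra.
  - intros i Hi. assert (Hk : / sqrt a * / sqrt a * a = 1) by (rewrite Hs; field; lra).
    rewrite HMdd, (Hherm d i) by lia.
    split; apply Cext; simpl; rewrite <- (Rmult_1_r (_ (M i d))), <- Hk at 1; ring.
Qed.

Lemma schur_split_zero d M : psd (S d) M -> Re (M d d) = 0 -> schur_split d M (fun _ => C0).
Proof.
  intros Hp Ha.
  assert (Hrow : forall i, (i <= d)%nat -> M d i = C0).
  { intros i Hi. destruct (Nat.eq_dec i d) as [->|Hne].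
    - apply Cext; [exact Ha|exact (hermitian_diag_real _ M d (proj1 Hp) ltac:(lia))].
    - apply (psd_zero_diag_row d M Hp Ha). lia. }
  split.
  - split; [apply hermitian_sub_rank_one, Hp|]. intros w.
    change (0 <= Re (qform d (fun i j => Csub (M i j) (Cmul C0 (Cconj C0))) w)).
    rewrite qform_sub_rank_one.
    rewrite (Csum_0 d (fun j => Cmul (Cconj C0) (w j))) by (intros; apply Cext; simpl; ring).
    pose proof (psd_qform_last d M w C0 Hp) as H.
    set (q := qform d M w) in *. unfold Cnorm2 in *. simpl in *. nra.
  - intros i Hi. split.
    + rewrite (proj1 Hp i d) by lia. unfold madj. rewrite Hrow by exact Hi.
      apply Cext; simpl; ring.
    + rewrite Hrow by exact Hi. apply Cext; simpl; ring.
Qed.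

Lemma psd_schur_split d M : psd (S d) M -> exists v, schur_split d M v.
Proof.
  intros Hp. destruct (Rlt_dec 0 (Re (M d d))) as [Hpos|Hnpos].
  - eexists. exact (schur_split_pos d M Hp Hpos).
  - eexists. apply (schur_split_zero d M Hp).
    pose proof (psd_diag_nonneg d M Hp). lra.
Qed.

Lemma psd_gram d M : psd d M -> exists V : nat -> Vec,
  forall i j, (i < d)%nat -> (j < d)%nat -> M i j = Csum d (fun k => Cmul (V k i) (Cconj (V k j))).
Proof.
  revert M. induction d; intros M Hp.
  - exists (fun _ _ => C0). intros; lia.
  - destruct (psd_schur_split d M Hp) as [v [Hp' Hb]].
    destruct (IHd _ Hp') as [V' HV'].
    exists (fun k i => if Nat.ltb k d then (if Nat.eqb i d then C0 else V' k i) else v i).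
    intros i j Hi Hj. simpl. rewrite Nat.ltb_irrefl.
    destruct (Nat.eq_dec i d) as [->|Hid].
    + rewrite Csum_0. { rewrite (proj2 (Hb j ltac:(lia))). ring. }
      intros k Hk. rewrite Nat.eqb_refl. destruct (Nat.ltb_spec k d); [|lia]. ring.
    + destruct (Nat.eq_dec j d) as [->|Hjd].
      * rewrite Csum_0. { rewrite (proj1 (Hb i ltac:(lia))). ring. }
        intros k Hk. rewrite Nat.eqb_refl. destruct (Nat.ltb_spec k d); [|lia].
        apply Cext; simpl; ring.
      * rewrite (Csum_ext d _ (fun k => Cmul (V' k i) (Cconj (V' k j)))).
        2:{ intros k Hk. destruct (Nat.ltb_spec k d); [|lia].
            destruct (Nat.eqb_spec i d); [lia|]. destruct (Nat.eqb_spec j d); [lia|]. reflexivity. }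
        rewrite <- HV' by lia. unfold Csub. ring.
Qed.

(* With [sigma = V^* V], the vector [psi (a * n + k) = V k a] of [C^n (x) C^n] purifies [sigma]. *)
Lemma density_purification n sigma : density n sigma ->
  exists m psi, unit_vec (n * m) psi /\ meq n (ptraceZ n m (proj psi)) sigma.
Proof.
  intros [Hp Htr]. destruct (psd_gram n sigma Hp) as [V HV].
  exists n, (fun idx => V (idx mod n)%nat (idx / n)%nat).
  split.
  - unfold unit_vec. rewrite Rsum_blocks.
    transitivity (Re (mtrace n sigma)); [|rewrite Htr; reflexivity].
    unfold mtrace. rewrite Re_Csum. apply Rsum_ext; intros a Ha.
    rewrite HV, Re_Csum by lia. apply Rsum_ext; intros k Hk.
    rewrite idx_mod, idx_div by lia. unfold Cnorm2; simpl. ring.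
  - intros a b Ha Hb. unfold ptraceZ, proj. rewrite HV by lia. apply Csum_ext; intros k Hk.
    rewrite !idx_mod, !idx_div by lia. reflexivity.
Qed.

(** * Unitarity of the exponential of a skew-adjoint matrix *)

Definition is_Cseries (x : nat -> C) (l : C) : Prop :=
  is_series (fun k => Re (x k)) (Re l) /\ is_series (fun k => Im (x k)) (Im l).

Lemma Rsum_sum_f_R0 n f : Rsum (S n) f = sum_f_R0 f n.
Proof. induction n; simpl; [ring|]. rewrite <- IHn. reflexivity. Qed.

Lemma is_series_Un_cv (f : nat -> R) a : Un_cv (fun N => Rsum (S N) f) a -> is_series f a.
Proof.
  intros H. apply is_series_Reals. intros eps he. destruct (H eps he) as [N HN].
  exists N; intros k Hk. rewrite <- Rsum_sum_f_R0. apply HN. exact Hk.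
Qed.

Lemma is_Cseries_Un_cv (f : nat -> C) l :
  Un_cv (fun N => Re (Csum (S N) f)) (Re l) -> Un_cv (fun N => Im (Csum (S N) f)) (Im l) ->
  is_Cseries f l.
Proof.
  intros H1 H2. split; apply is_series_Un_cv.
  - intros eps he. destruct (H1 eps he) as [N HN].
    exists N; intros k Hk. rewrite <- Re_Csum. apply HN; exact Hk.
  - intros eps he. destruct (H2 eps he) as [N HN].
    exists N; intros k Hk. rewrite <- Im_Csum. apply HN; exact Hk.
Qed.

Lemma is_series_partial_sums_const (f : nat -> R) c : (forall N, Rsum (S N) f = c) -> is_series f c.
Proof.
  intros H. apply is_series_Un_cv. intros eps he. exists O. intros k _.
  rewrite H. unfold R_dist. rewrite Rminus_diag, Rabs_R0. exact he.
Qed.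

Lemma is_Cseries_ext x y l : (forall k, x k = y k) -> is_Cseries x l -> is_Cseries y l.
Proof.
  intros H [H1 H2]. split; eapply is_series_ext; try eassumption; intros k; simpl; rewrite H; reflexivity.
Qed.

Lemma is_Cseries_unique x l1 l2 : is_Cseries x l1 -> is_Cseries x l2 -> l1 = l2.
Proof.
  intros [A1 A2] [B1 B2]. apply Cext.
  - apply is_series_unique in A1. apply is_series_unique in B1. congruence.
  - apply is_series_unique in A2. apply is_series_unique in B2. congruence.
Qed.

Lemma is_Cseries_first c : is_Cseries (fun s => if Nat.eqb s 0 then c else C0) c.
Proof.
  split; apply is_series_partial_sums_const; intros N; induction N; simpl in *; try ring;
  rewrite IHN; simpl; ring.
Qed.

Lemma is_Cseries_plus x y lx ly : is_Cseries x lx -> is_Cseries y ly ->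
  is_Cseries (fun k => Cadd (x k) (y k)) (Cadd lx ly).
Proof.
  intros [A1 A2] [B1 B2]. split.
  - exact (is_series_plus _ _ _ _ A1 B1).
  - exact (is_series_plus _ _ _ _ A2 B2).
Qed.

Lemma is_Cseries_Csum n (f : nat -> nat -> C) (l : nat -> C) :
  (forall k, (k < n)%nat -> is_Cseries (f k) (l k)) ->
  is_Cseries (fun s => Csum n (fun k => f k s)) (Csum n l).
Proof.
  induction n; intros H.
  - split; apply is_series_partial_sums_const; intros N; simpl; rewrite Rsum_const; ring.
  - simpl. apply is_Cseries_plus; [apply IHn; intros; apply H; lia|apply H; lia].
Qed.

Lemma is_Cseries_conj x l : is_Cseries x l -> is_Cseries (fun k => Cconj (x k)) (Cconj l).
Proof. intros [A1 A2]. split; [exact A1|exact (is_series_opp _ _ A2)]. Qed.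

Lemma is_Cseries_mult (x y : nat -> C) lx ly : is_Cseries x lx -> is_Cseries y ly ->
  ex_series (fun k => Rabs (Re (x k))) -> ex_series (fun k => Rabs (Im (x k))) ->
  ex_series (fun k => Rabs (Re (y k))) -> ex_series (fun k => Rabs (Im (y k))) ->
  is_Cseries (fun s => Csum (S s) (fun p => Cmul (x p) (y (s - p)%nat))) (Cmul lx ly).
Proof.
  intros [Hx1 Hx2] [Hy1 Hy2] A1 A2 B1 B2.
  pose proof (is_series_mult _ _ _ _ Hx1 Hy1 A1 B1) as P11.
  pose proof (is_series_mult _ _ _ _ Hx2 Hy2 A2 B2) as P22.
  pose proof (is_series_mult _ _ _ _ Hx1 Hy2 A1 B2) as P12.
  pose proof (is_series_mult _ _ _ _ Hx2 Hy1 A2 B1) as P21.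
  split.
  - eapply is_series_ext; [|exact (is_series_minus _ _ _ _ P11 P22)]. intros s. cbv beta.
    rewrite <- !Rsum_sum_f_R0, Re_Csum.
    change (plus ?a (opp ?b)) with (a - b). rewrite <- Rsum_sub. reflexivity.
  - eapply is_series_ext; [|exact (is_series_plus _ _ _ _ P12 P21)]. intros s. cbv beta.
    rewrite <- !Rsum_sum_f_R0, Im_Csum.
    change (plus ?a ?b) with (a + b). rewrite <- Rsum_add. reflexivity.
Qed.

Lemma mpow_comm d X p : meq d (mmul d X (mpow d X p)) (mmul d (mpow d X p) X).
Proof.
  induction p; simpl.
  - eapply meq_trans; [apply mmul_mid_r|]. apply meq_sym, mmul_mid_l.
  - eapply meq_trans; [apply meq_sym, mmul_assoc|]. apply mmul_meq; [exact IHp|apply meq_refl].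
Qed.

Lemma mpow_add d X p q : meq d (mmul d (mpow d X p) (mpow d X q)) (mpow d X (p + q)).
Proof.
  induction q.
  - rewrite Nat.add_0_r. apply mmul_mid_r.
  - rewrite Nat.add_succ_r. simpl. eapply meq_trans; [apply meq_sym, mmul_assoc|].
    apply mmul_meq; [exact IHq|apply meq_refl].
Qed.

Lemma mpow_skew_adj d X : (forall i j, (i < d)%nat -> (j < d)%nat -> Cconj (X j i) = Copp (X i j)) ->
  forall p i j, (i < d)%nat -> (j < d)%nat ->
  Cconj (mpow d X p j i) = Cscale ((-1) ^ p) (mpow d X p i j).
Proof.
  intros HX p. induction p; intros i j Hi Hj.
  - simpl. unfold mid. destruct (Nat.eqb_spec j i), (Nat.eqb_spec i j); subst; try lia;
    apply Cext; simpl; ring.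
  - simpl. unfold mmul at 1. rewrite Csum_conj.
    rewrite (Csum_ext d _ (fun k => Cmul (mkC ((-1) ^ S p) 0) (Cmul (X i k) (mpow d X p k j)))).
    2:{ intros k Hk. rewrite Cconj_mul, IHp, HX by lia. apply Cext; simpl; ring. }
    rewrite Csum_mul_l. change (Csum d _) with (mmul d X (mpow d X p) i j).
    rewrite (mpow_comm d X p i j Hi Hj). apply Cext; simpl; ring.
Qed.

Definition nrm (z : C) : R := Rabs (Re z) + Rabs (Im z).

Lemma nrm_nonneg z : 0 <= nrm z.
Proof. unfold nrm. pose proof (Rabs_pos (Re z)); pose proof (Rabs_pos (Im z)); lra. Qed.
Lemma nrm_add z w : nrm (Cadd z w) <= nrm z + nrm w.
Proof.
  unfold nrm; simpl. pose proof (Rabs_triang (Re z) (Re w)). pose proof (Rabs_triang (Im z) (Im w)).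
  lra.
Qed.
Lemma nrm_mul z w : nrm (Cmul z w) <= nrm z * nrm w.
Proof.
  unfold nrm; simpl. destruct z as [a b], w as [c e]; simpl.
  pose proof (Rabs_triang (a * c) (- (b * e))). pose proof (Rabs_triang (a * e) (b * c)).
  rewrite Rabs_Ropp in H. rewrite !Rabs_mult in *. unfold Rminus. nra.
Qed.
Lemma nrm_scale r z : nrm (Cscale r z) = Rabs r * nrm z.
Proof. unfold nrm; simpl. rewrite !Rabs_mult. ring. Qed.
Lemma nrm_Csum n f : nrm (Csum n f) <= Rsum n (fun k => nrm (f k)).
Proof.
  induction n; simpl. { unfold nrm; simpl; rewrite Rabs_R0; lra. }
  eapply Rle_trans; [apply nrm_add|]. lra.
Qed.

Lemma mpow_bound d X : exists K, 0 <= K /\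
  forall p i j, (i < d)%nat -> (j < d)%nat -> nrm (mpow d X p i j) <= K ^ p.
Proof.
  set (B := Rsum d (fun i => Rsum d (fun j => nrm (X i j)))).
  assert (HB0 : 0 <= B) by (apply Rsum_nonneg; intros; apply Rsum_nonneg; intros; apply nrm_nonneg).
  assert (HB : forall i j, (i < d)%nat -> (j < d)%nat -> nrm (X i j) <= B).
  { intros i j Hi Hj. eapply Rle_trans.
    2:{ apply (Rsum_ge_term d (fun i => Rsum d (fun j => nrm (X i j))) i); [|exact Hi].
        intros; apply Rsum_nonneg; intros; apply nrm_nonneg. }
    apply (Rsum_ge_term d (fun j => nrm (X i j)) j); [intros; apply nrm_nonneg|exact Hj]. }
  exists (INR d * B + 1). pose proof (pos_INR d) as Hd.
  split; [nra|]. intros p. induction p; intros i j Hi Hj.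
  - simpl. unfold mid, nrm. destruct (Nat.eqb i j); simpl; rewrite ?Rabs_R0, ?Rabs_R1; lra.
  - simpl. unfold mmul. eapply Rle_trans; [apply nrm_Csum|].
    apply Rle_trans with (Rsum d (fun _ => (INR d * B + 1) ^ p * B)).
    { apply Rsum_le; intros k Hk. eapply Rle_trans; [apply nrm_mul|].
      apply Rmult_le_compat; try apply nrm_nonneg; [apply IHp|apply HB]; lia. }
    rewrite Rsum_const.
    assert (0 <= (INR d * B + 1) ^ p) by (apply pow_le; nra).
    nra.
Qed.

Lemma ex_series_exp_bound (z : nat -> C) K : (forall p, nrm (z p) <= K ^ p * / INR (fact p)) ->
  ex_series (fun p => Rabs (Re (z p))) /\ ex_series (fun p => Rabs (Im (z p))).
Proof.
  intros H.
  assert (Ee : ex_series (fun p => K ^ p * / INR (fact p))).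
  { exists (exp K). eapply is_series_ext; [|exact (is_exp_Reals K)].
    intros p. simpl. rewrite pow_n_pow. reflexivity. }
  split; eapply (@ex_series_le R_AbsRing R_CompleteNormedModule); try exact Ee;
    intros p; specialize (H p); unfold nrm in H;
    change (norm (Rabs ?x)) with (Rabs (Rabs x)); rewrite Rabs_Rabsolu;
    pose proof (Rabs_pos (Re (z p))); pose proof (Rabs_pos (Im (z p))); lra.
Qed.

Lemma ex_series_mpow_terms d X (c : nat -> R) i j :
  (forall p, Rabs (c p) <= / INR (fact p)) -> (i < d)%nat -> (j < d)%nat ->
  ex_series (fun p => Rabs (Re (Cscale (c p) (mpow d X p i j)))) /\
  ex_series (fun p => Rabs (Im (Cscale (c p) (mpow d X p i j)))).
Proof.
  intros Hc Hi Hj. destruct (mpow_bound d X) as [K [HK HKb]].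
  apply (ex_series_exp_bound _ K). intros p. rewrite nrm_scale.
  specialize (HKb p i j Hi Hj). specialize (Hc p).
  pose proof (Rabs_pos (c p)). pose proof (nrm_nonneg (mpow d X p i j)).
  assert (0 <= K ^ p) by (apply pow_le; exact HK).
  rewrite Rmult_comm. apply Rmult_le_compat; lra.
Qed.

(* [sum_(p <= s) (-1)^p / (p! (s - p)!) = (1 - 1)^s / s!] *)
Lemma sum_alt_inv_fact s :
  Rsum (S s) (fun p => / INR (fact p) * (-1) ^ p * / INR (fact (s - p))) =
  if Nat.eqb s 0 then 1 else 0.
Proof.
  destruct s as [|s'].
  - simpl. field.
  - set (s := S s'). simpl (Nat.eqb s 0).
    assert (Hf : INR (fact s) <> 0) by apply INR_fact_neq_0.
    assert (E : Rsum (S s) (fun p => / INR (fact p) * (-1) ^ p * / INR (fact (s - p)))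
                * INR (fact s) = 0).
    { rewrite Rmult_comm, <- Rsum_mul_l, Rsum_sum_f_R0.
      transitivity ((-1 + 1) ^ s); [|unfold s; simpl; ring].
      rewrite Binomial.binomial. apply sum_eq; intros p Hp.
      unfold Binomial.C. rewrite pow1.
      pose proof (INR_fact_neq_0 p). pose proof (INR_fact_neq_0 (s - p)). field; auto. }
    apply Rmult_integral in E. destruct E; [assumption|contradiction].
Qed.

Lemma exp_neg_exp_cauchy_coeff d M i j s : (i < d)%nat -> (j < d)%nat ->
  Csum d (fun k => Csum (S s) (fun p =>
    Cmul (Cscale (/ INR (fact p) * (-1) ^ p) (mpow d M p i k))
         (Cscale (/ INR (fact (s - p))) (mpow d M (s - p) k j)))) =
  if Nat.eqb s 0 then mid i j else C0.
Proof.
  intros Hi Hj. rewrite Csum_swap.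
  rewrite (Csum_ext (S s) _ (fun p =>
    Cmul (mkC (/ INR (fact p) * (-1) ^ p * / INR (fact (s - p))) 0) (mpow d M s i j))).
  2:{ intros p Hp.
      transitivity (Cmul (mkC (/ INR (fact p) * (-1) ^ p * / INR (fact (s - p))) 0)
                         (mmul d (mpow d M p) (mpow d M (s - p)) i j)).
      { unfold mmul. rewrite <- Csum_mul_l. apply Csum_ext; intros; apply Cext; simpl; ring. }
      rewrite (mpow_add d M p (s - p) i j Hi Hj). do 2 f_equal. lia. }
  rewrite Csum_mul_r.
  replace (Csum (S s) _) with (mkC (if Nat.eqb s 0 then 1 else 0) 0).
  2:{ rewrite <- sum_alt_inv_fact.
      apply Cext; rewrite ?Re_Csum, ?Im_Csum; simpl; [reflexivity|rewrite Rsum_const; ring]. }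
  destruct (Nat.eqb_spec s 0); [subst s|]; apply Cext; simpl; ring.
Qed.

Lemma mexp_skew_unitary d M U :
  (forall i j, (i < d)%nat -> (j < d)%nat -> Cconj (M j i) = Copp (M i j)) ->
  is_mexp d M U -> meq d (mmul d (madj U) U) mid.
Proof.
  intros Hskew HU i j Hi Hj.
  set (x := fun k p => Cscale (/ INR (fact p) * (-1) ^ p) (mpow d M p i k)).
  set (y := fun k q => Cscale (/ INR (fact q)) (mpow d M q k j)).
  assert (Hfact : forall p, 0 < / INR (fact p)) by (intros; apply Rinv_0_lt_compat, INR_fact_lt_0).
  assert (HS : forall a b, (a < d)%nat -> (b < d)%nat ->
     is_Cseries (fun p => Cscale (/ INR (fact p)) (mpow d M p a b)) (U a b)).
  { intros a b Ha Hb. destruct (HU a b Ha Hb). apply is_Cseries_Un_cv; assumption. }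
  (* [U^*] is the exponential of [M^* = -M]. *)
  assert (Hx : forall k, (k < d)%nat -> is_Cseries (x k) (Cconj (U k i))).
  { intros k Hk. eapply is_Cseries_ext; [|apply is_Cseries_conj, (HS k i Hk Hi)].
    intros p. unfold x. cbv beta.
    transitivity (Cscale (/ INR (fact p)) (Cconj (mpow d M p k i))); [apply Cext; simpl; ring|].
    rewrite (mpow_skew_adj d M Hskew p i k Hi Hk). apply Cext; simpl; ring. }
  assert (Hc : is_Cseries
      (fun s => Csum d (fun k => Csum (S s) (fun p => Cmul (x k p) (y k (s - p)%nat))))
      (Csum d (fun k => Cmul (Cconj (U k i)) (U k j)))).
  { apply is_Cseries_Csum. intros k Hk.
    destruct (ex_series_mpow_terms d M (fun p => / INR (fact p) * (-1) ^ p) i k) as [A1 A2];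
      try assumption.
    { intros p. rewrite Rabs_mult, pow_1_abs, Rmult_1_r, Rabs_right; [lra|].
      apply Rle_ge, Rlt_le, Hfact. }
    destruct (ex_series_mpow_terms d M (fun p => / INR (fact p)) k j) as [B1 B2]; try assumption.
    { intros p. rewrite Rabs_right; [lra|]. apply Rle_ge, Rlt_le, Hfact. }
    apply is_Cseries_mult; auto. exact (HS k j Hk Hj). }
  unfold mmul, madj. eapply is_Cseries_unique; [exact Hc|].
  eapply is_Cseries_ext; [|apply (is_Cseries_first (mid i j))].
  intros s. symmetry. exact (exp_neg_exp_cauchy_coeff d M i j s Hi Hj).
Qed.

Theorem mainTheorem6 (n r : nat) (sigma : Mat) (A : nat -> Mat) (H U : Mat) (eps : R) :
  density n sigma ->
  kraus n r A ->
  hermitian n H ->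
  is_mexp n (mscale (mkC 0 (- eps)) H) U ->
  is_glb
    (Gch_values n (chan_ext n r A)
       (fun m rho => mmul (n * m) (mmul (n * m) (kron_id n m U) (chan_ext n r A m rho))
                          (madj (kron_id n m U)))
       sigma)
    (1 + Rsum r (fun i => Rsum r (fun j =>
            Cnorm2 (mtrace n (mmul n sigma (mmul n (mmul n (madj (A i)) U) (A j))))))
       - Rsum r (fun i => Rsum r (fun j =>
            Cnorm2 (mtrace n (mmul n sigma (mmul n (madj (A i)) (A j))))))).
Proof.
  intros Hd HK Hh HU.
  assert (Hunit : meq n (mmul n (madj U) U) mid).
  { apply (mexp_skew_unitary n (mscale (mkC 0 (- eps)) H) U); [|exact HU].
    intros a b Ha Hb. unfold mscale. rewrite (Hh a b) by lia. unfold madj.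
    apply Cext; simpl; ring. }
  split.
  - intros g [m [psi [_ [Hpt ->]]]].
    rewrite (superfidelity_purification n r sigma A U m psi HK Hunit (proj2 Hd) Hpt). lra.
  - intros z Hz. destruct (density_purification n sigma Hd) as [m [psi [Hu Hpt]]].
    apply Hz. exists m, psi. split; [exact Hu|]. split; [exact Hpt|].
    symmetry. exact (superfidelity_purification n r sigma A U m psi HK Hunit (proj2 Hd) Hpt).
Qed.
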